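(* For integers $n\ge1$ and $0\le p\le n-1$, $$s(n,n-p)=\frac{(n-1)!}{(n-p-1)!}\sum_{0\le k_1,\dots,k_p\le p}\binom{n+K-1}{K}\frac{K!}{k_1!\cdots k_p!}\,\delta_{p,\sum_{m=1}^p mk_m}\prod_{m=1}^{p}\left(\frac{-1}{(m+1)!}\right)^{k_m},\qquad K=k_1+\cdots+k_p .$$
   Context: $s(n,k)$ denotes the signed Stirling numbers of the first kind, defined by $x(x-1)\cdots(x-n+1)=\sum_{k}s(n,k)x^k$. $\delta$ is the Kronecker delta; for $p=0$ the sum is over the empty tuple and equals $1$. *)

From HB Require Import structures.
From mathcomp Require Import all_boot all_order all_algebra.
Set Implicit Arguments. Unset Strict Implicit. Unset Printing Implicit Defensive.
Import Order.TTheory GRing.Theory Num.Theory.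
Local Open Scope ring_scope.

Definition falling_poly (n : nat) : {poly int} := \prod_(i < n) ('X - (i%:R)%:P).
Definition stirling1 (n k : nat) : int := (falling_poly n)`_k.

From HB Require Import structures.
From mathcomp Require Import all_boot all_order all_algebra ring.
Import Order.TTheory GRing.Theory Num.Theory.
Local Open Scope ring_scope.

(* Let F = (e^X - 1) / X = 1 - A, with A = - \sum_(j >= 1) X^j / (j+1)!, and let
   r_(m,p) be the coefficients of F^-(m+1) = \sum_K 'C(m+K, K) A^K.  The
   differential equation X F' = e^X - F yields the recurrence
   (m+1) r_(m+1,p+1) = (m-p) r_(m,p+1) - (m+1) r_(m,p), which after scaling by
   m^_p is the recurrence s(n+1,k+1) = s(n,k) - n s(n,k+1); hence
   s(m+1, m+1-p) = m^_p r_(m,p).  Expanding A^K by the multinomial theorem gives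
   the stated sum.  Only coefficients up to degree p matter, so all series are
   truncated polynomials and identities are read modulo X^(p+1). *)

Lemma falling_polyS n : falling_poly n.+1 = falling_poly n * ('X - n%:R%:P).
Proof. by rewrite /falling_poly big_ord_recr. Qed.

Lemma stirling1SS n k :
  stirling1 n.+1 k.+1 = stirling1 n k - n%:R * stirling1 n k.+1.
Proof. by rewrite /stirling1 falling_polyS mulrBr coefB coefMX coefMC mulrC. Qed.

Lemma stirling1S0 n : stirling1 n.+1 0 = 0.
Proof.
have s_rec m : stirling1 m.+1 0 = - m%:R * stirling1 m 0.
  by rewrite /stirling1 falling_polyS mulrBr coefB coefMX coefMC sub0r mulrC mulNr.
by elim: n => [|n IHn]; rewrite s_rec ?IHn ?mulr0 // mulr0n oppr0 mul0r.
Qed.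

Lemma stirling1_gt n k : (n < k)%N -> stirling1 n k = 0.
Proof.
elim: n k => [|n IHn] [|k] // ltnk.
  by rewrite /stirling1 /falling_poly big_ord0 coefC.
by rewrite stirling1SS !IHn ?mulr0 ?subr0 // ltnW.
Qed.

Lemma stirling1nn n : stirling1 n n = 1.
Proof.
elim: n => [|n IHn]; first by rewrite /stirling1 /falling_poly big_ord0 coefC.
by rewrite stirling1SS IHn stirling1_gt ?mulr0 ?subr0.
Qed.

Section PolyModXn.
Context {F : fieldType}.
Implicit Types p q : {poly F}.

Lemma dvdXnP n p : reflect (forall i, (i < n)%N -> p`_i = 0) ('X^n %| p).
Proof.
apply: (iffP (modp_eq0P _ _)); rewrite -Pdiv.IdomainMonic.take_poly_modp.
  by move=> take0 i ltin; have := coef_take_poly n p i; rewrite take0 coef0 ltin.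
by move=> p_low; apply/polyP => i; rewrite coef_take_poly coef0; case: ifP => // /p_low.
Qed.

Lemma coef_eq_dvdXn n p q i : 'X^n %| p - q -> (i < n)%N -> p`_i = q`_i.
Proof. by move=> /dvdXnP pq ltin; apply/eqP; rewrite -subr_eq0 -coefB pq. Qed.

End PolyModXn.

Definition invfact {R : numFieldType} (j : nat) : R := (j`!%:R)^-1.

Lemma invfact_bin (R : numFieldType) K j : (j <= K)%N ->
  invfact K * 'C(K, j)%:R = invfact j * invfact (K - j) :> R.
Proof.
move=> lejK; rewrite /invfact -(bin_fact lejK) !natrM !invfM mulrAC -mulrA.
by rewrite mulKf // pnatr_eq0 -lt0n bin_gt0.
Qed.

Section Multinomial.
Context {R : numFieldType} {A : comAlgType R}.

(* The multinomial theorem is read off the coefficient of 'X^K in a product of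
   these polynomials. *)
Definition exp_trunc N (x : A) : {poly A} := \poly_(j < N) (invfact j *: x ^+ j).

Lemma prod_exp_trunc p N (x : 'I_p -> A) :
  \prod_(i < p) exp_trunc N (x i) =
  \sum_(k : {ffun 'I_p -> 'I_N})
     ((\prod_(i < p) invfact (k i)) *: \prod_(i < p) x i ^+ k i)
       *: 'X^(\sum_(i < p) (k i : nat)).
Proof.
rewrite /exp_trunc; under eq_bigr do rewrite poly_def.
rewrite bigA_distr_bigA /=; apply: eq_bigr => k _.
by rewrite scaler_prod prodrXr -scaler_prod.
Qed.

Lemma coef_prod_exp_trunc p N (x : 'I_p -> A) K : (K < N)%N ->
  (\prod_(i < p) exp_trunc N (x i))`_K = invfact K *: (\sum_(i < p) x i) ^+ K.
Proof.
elim: p x K => [|p IHp] x K ltKN.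
  rewrite !big_ord0 coef1 expr0n; case: K {ltKN} => [|K] /=; last by rewrite scaler0.
  by rewrite /invfact invr1 scale1r.
rewrite !big_ord_recr /= coefM addrC exprDn scaler_sumr; apply: eq_bigr => j _.
have lejK : (j <= K)%N by rewrite -ltnS.
rewrite IHp ?(leq_ltn_trans lejK) // /exp_trunc coef_poly.
rewrite (leq_ltn_trans (leq_subr j K) ltKN) -scalerAl -scalerAr scalerA.
by rewrite -scaler_nat scalerA invfact_bin // [_ * x _ ^+ _]mulrC.
Qed.

Lemma multinomial_exprD p N (x : 'I_p -> A) K : (K < N)%N ->
  invfact K *: (\sum_(i < p) x i) ^+ K =
  \sum_(k : {ffun 'I_p -> 'I_N} | \sum_(i < p) (k i : nat) == K)
     (\prod_(i < p) invfact (k i)) *: \prod_(i < p) x i ^+ k i.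
Proof.
move=> ltKN; rewrite -(@coef_prod_exp_trunc _ _ x _ ltKN) prod_exp_trunc coef_sum.
rewrite [RHS]big_mkcond /=; apply: eq_bigr => k _.
by rewrite coefZ coefXn eq_sym; case: eqP; rewrite ?mulr1 ?mulr0.
Qed.

End Multinomial.

Lemma coef_prod_monomial (R : comNzRingType) p (c : 'I_p -> R) (e k : 'I_p -> nat) n :
  (\prod_(i < p) (c i *: 'X^(e i)) ^+ k i)`_n =
  (if n == (\sum_(i < p) e i * k i)%N then 1 else 0) * \prod_(i < p) c i ^+ k i.
Proof.
under eq_bigr do rewrite exprZn -exprM.
by rewrite scaler_prod prodrXr coefZ coefXn mulrC; case: eqP.
Qed.

Section NorlundSeries.
Variables (R : numFieldType) (L : nat).

(* [apoly] is 1 - (e^X - 1) / X truncated at degree L. *)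
Definition acoef (j : nat) : R := - invfact j.+1.
Definition apoly : {poly R} := \sum_(i < L) acoef i.+1 *: 'X^(i.+1).

(* [norlund m] truncates (1 - apoly)^-(m+1), i.e. (X / (e^X - 1))^(m+1). *)
Definition norlund (m : nat) : {poly R} :=
  \sum_(K < L.+1) 'C(m + K, K)%:R *: apoly ^+ K.

Lemma coef_apoly j : apoly`_j = if (0 < j <= L)%N then acoef j else 0.
Proof.
rewrite /apoly; elim: L j => [|n IHn] j; first by rewrite big_ord0 coef0; case: j => [|[]].
rewrite big_ord_recr coefD IHn coefZ coefXn; case: j => [|j] //=.
  by rewrite mulr0 addr0.
by rewrite eqSS !ltnS; case: ltngtP => [|_|->]; rewrite ?mulr1 ?mulr0 ?addr0 ?add0r.
Qed.

Lemma acoefS j : acoef j.+1 * j.+2%:R = acoef j.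
Proof.
by rewrite /acoef /invfact factS natrM invfM mulNr mulrAC mulVf ?mul1r // pnatr_eq0.
Qed.

Lemma dvdXn_apoly K : 'X^K %| apoly ^+ K.
Proof.
apply: dvdp_exp2r; rewrite -['X]expr1.
by apply/dvdXnP => -[|//] _; rewrite coef_apoly.
Qed.

(* The truncation of the identity X F' = e^X - F for F = (e^X - 1) / X. *)
Lemma apoly_ode : 'X^(L.+1) %| (1 - apoly) * (1 - 'X) - ('X * apoly^`() + 1).
Proof.
apply/dvdXnP => i; rewrite ltnS => leiL.
rewrite mulrBr mulr1 !coefB coefMX !coefD coefXM coef_deriv !coefN !coef1 !coef_apoly.
case: i leiL => [|[|i]] leiL /=.
- by rewrite !subr0 add0r subrr.
- by rewrite leiL /acoef /invfact mulr1n (_ : 2`! = 2)%N //; field.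
- by rewrite leiL ltnW // -(acoefS i.+1) -mulr_natr -[i.+3]addn1 natrD; ring.
Qed.

Lemma norlund_shift m :
  norlund m = (1 - apoly) * norlund m.+1 + 'C(m.+1 + L, L)%:R *: apoly ^+ L.+1.
Proof.
set S := \sum_(i < L) 'C(m.+1 + i, i)%:R *: apoly ^+ i.+1.
have apoly_norlund : apoly * norlund m.+1 = S + 'C(m.+1 + L, L)%:R *: apoly ^+ L.+1.
  rewrite /norlund mulr_sumr big_ord_recr /=.
  by congr (_ + _); [apply: eq_bigr => i _|]; rewrite -scalerAr exprS.
have pascal : norlund m.+1 = norlund m + S.
  rewrite /norlund !big_ord_recl /= !bin0 -addrA -big_split; congr (_ + _).
  apply: eq_bigr => i _ /=; rewrite -scalerDl -natrD /bump /= !add1n !addnS.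
  by rewrite binS addSn.
by rewrite mulrBl mul1r apoly_norlund pascal opprD addrA addrK subrK.
Qed.

Lemma deriv_norlund m : (norlund m)^`() =
  m.+1%:R *: apoly^`() * (norlund m.+1 - 'C(m.+1 + L, L)%:R *: apoly ^+ L).
Proof.
rewrite {2}/norlund big_ord_recr /= addrK /norlund raddf_sum big_ord_recl /=.
rewrite derivZ expr0 derivC scaler0 add0r mulr_sumr; apply: eq_bigr => i _.
rewrite derivZ deriv_exp /= -scaler_nat scalerA -scalerAl -scalerAr scalerA.
congr (_ *: _); rewrite -!natrM; congr _%:R.
by rewrite mulnC mul_bin_left /bump /= add1n addnS subSn ?leq_addl // addnK addSn.
Qed.

Lemma norlund_ode m :
  'X^(L.+1) %| 'X * (norlund m)^`() - m.+1%:R *: (norlund m * (1 - 'X) - norlund m.+1).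
Proof.
rewrite deriv_norlund (norlund_shift m); set c : R := 'C(_, _)%:R.
set N := norlund m.+1; pose E := (1 - apoly) * (1 - 'X) - ('X * apoly^`() + 1).
have -> : 'X * (m.+1%:R *: apoly^`() * (N - c *: apoly ^+ L)) -
    m.+1%:R *: (((1 - apoly) * N + c *: apoly ^+ L.+1) * (1 - 'X) - N) =
  (- m.+1%:R)%:P * (c%:P * apoly^`() * ('X * apoly ^+ L) + N * E +
                    c%:P * apoly ^+ L.+1 * (1 - 'X)).
  by rewrite /E -!mul_polyC polyCN; ring.
apply/dvdp_mull/dvdp_add; first apply/dvdp_add.
- by apply/dvdp_mull; rewrite exprS dvdp_mul ?dvdXn_apoly.
- exact/dvdp_mull/apoly_ode.
- exact/dvdp_mulr/dvdp_mull/dvdXn_apoly.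
Qed.

Lemma coef_norlund0 m : (norlund m)`_0 = 1.
Proof.
rewrite /norlund big_ord_recl /= addn0 bin0 scale1r expr0 coefD coef1 /=.
rewrite coef_sum big1 ?addr0 // => i _.
by rewrite coefZ; have /dvdXnP -> // := dvdXn_apoly i.+1; rewrite mulr0.
Qed.

Lemma coef_norlund_rec m p : (p < L)%N ->
  m.+1%:R * (norlund m.+1)`_p.+1 =
  (m%:R - p%:R) * (norlund m)`_p.+1 - m.+1%:R * (norlund m)`_p.
Proof.
move=> ltpL; have /coef_eq_dvdXn/(_ (ltpL : p.+1 < L.+1)%N) := norlund_ode m.
rewrite coefXM coef_deriv coefZ !coefB [norlund m * _]mulrBr mulr1 coefB coefMX /=.
set r0 := (norlund m)`_p; set r1 := (norlund m)`_p.+1; set r2 := (norlund m.+1)`_p.+1.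
move=> ode_p; apply/eqP; rewrite -subr_eq0.
have -> : m.+1%:R * r2 - ((m%:R - p%:R) * r1 - m.+1%:R * r0) =
    r1 *+ p.+1 - m.+1%:R * (r1 - r0 - r2).
  by rewrite -mulr_natl -!natr1; ring.
by rewrite ode_p subrr.
Qed.

Lemma stirling1_norlund m p : (p <= L)%N -> (p <= m.+1)%N ->
  (stirling1 m.+1 (m.+1 - p))%:~R = (m ^_ p)%:R * (norlund m)`_p.
Proof.
elim: m p => [|m IHm] [|p] leL lem;
  rewrite ?subn0 ?stirling1nn ?coef_norlund0 ?ffactn0 ?mulr1 //.
  by case: p lem leL => // _ _; rewrite subnn stirling1S0 ffact_small ?mul0r.
have [->|ltpm] := eqVneq p m.+1; first by rewrite subnn stirling1S0 ffact_small ?mul0r.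
have lepm : (p <= m)%N by rewrite -ltnS ltn_neqAle ltpm.
have -> : (m.+2 - p.+1 = (m - p).+1)%N by rewrite subSS subSn.
rewrite stirling1SS intrB intrM -subSS IHm // -subSn // IHm ?(ltnW leL) //.
rewrite ffactSS ffactnSr natrM natrB // rmorph_nat.
by rewrite natrM [RHS]mulrAC coef_norlund_rec //; ring.
Qed.

Lemma coef_apoly_expr n K : (K < L.+1)%N ->
  (apoly ^+ K)`_n = K`!%:R *
  \sum_(k : {ffun 'I_L -> 'I_L.+1} | \sum_(i < L) (k i : nat) == K)
     \prod_(i < L) invfact (k i) *
     ((if n == (\sum_(i < L) i.+1 * k i)%N then 1 else 0) *
      \prod_(i < L) acoef i.+1 ^+ k i).
Proof.
move=> ltKL; have -> : apoly ^+ K = K`!%:R *: (invfact K *: apoly ^+ K).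
  by rewrite scalerA mulfV ?scale1r // pnatr_eq0 -lt0n fact_gt0.
rewrite /apoly (@multinomial_exprD _ _ _ _ _ _ ltKL) coefZ coef_sum; congr (_ * _).
by apply: eq_bigr => k _; rewrite coefZ coef_prod_monomial.
Qed.

Lemma coef_norlund m : (norlund m)`_L =
  \sum_(k : {ffun 'I_L -> 'I_L.+1})
     let K := (\sum_(i < L) (k i : nat))%N in
     'C(m + K, K)%:R * (K`!%:R * \prod_(i < L) invfact (k i))
     * (if L == (\sum_(i < L) i.+1 * k i)%N then 1 else 0)
     * \prod_(i < L) acoef i.+1 ^+ k i.
Proof.
rewrite /norlund coef_sum.
under eq_bigr => K _ do rewrite coefZ coef_apoly_expr // mulrA mulr_sumr.
rewrite (exchange_big_dep xpredT) //=; apply: eq_bigr => k _.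
rewrite (eq_bigl (fun K : 'I_L.+1 => (K : nat) == \sum_(i < L) (k i : nat))%N); last first.
  by move=> K; rewrite eq_sym.
set c := (\prod_(i < L) invfact (k i) * _).
rewrite (big_ord1_eq _ (fun K => 'C(m + K, K)%:R * K`!%:R * c)) ltnS /c.
case: leqP => [_|ltLK]; first by rewrite !mulrA.
suff -> : (L == \sum_(i < L) i.+1 * k i)%N = false by rewrite !mulr0 mul0r.
apply/negbTE; rewrite neq_ltn (leq_trans ltLK) //.
by apply: leq_sum => i _; rewrite leq_pmull.
Qed.

End NorlundSeries.

Theorem mainTheorem6 (n p : nat) (hn : (1 <= n)%N) (hp : (p <= n - 1)%N) :
  ((stirling1 n (n - p))%:~R : rat) =
  ((n - 1)`!)%:R / ((n - p - 1)`!)%:R *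
  \sum_(k : {ffun 'I_p -> 'I_p.+1})
     let K := (\sum_(i < p) (k i : nat))%N in
     ('C(n + K - 1, K))%:R
     * ((K`!)%:R / (\prod_(i < p) ((k i : nat)`!))%:R)
     * (if p == (\sum_(i < p) (i.+1 * k i))%N then 1 else 0)
     * \prod_(i < p) ((-1) / ((i.+2)`!)%:R) ^+ (k i : nat).
Proof.
case: n hn hp => [|m] // _; rewrite subn1 /= => lepm.
rewrite (@stirling1_norlund rat p m p) ?leqW // coef_norlund.
rewrite subnAC subn1 /= -(ffact_fact lepm) natrM mulfK ?pnatr_eq0 -?lt0n ?fact_gt0 //.
congr (_ * _); apply: eq_bigr => k _ /=.
rewrite addSn subn1 /= natr_prod -prodfV.
by congr (_ * _ * _ * _); apply: eq_bigr => i _; rewrite /acoef mulN1r.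
Qed.
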